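(* Let $0<\alpha<1$, $0<\tau_1<\tau_2$, and let $\Lambda\subset\mathbb{R}^n$ be a closed set of Lebesgue measure zero. Let $f\in L_{2\alpha}(\mathbb{R}^n)\cap C^\infty(\mathbb{R}^n\setminus\Lambda)\cap L^{\tau_2}_{loc}(\mathbb{R}^n)$ satisfy: there exist $K>0$, $q>0$ such that $K^{-1}d_0(y,\Lambda)^{-q}\leq f(y)\leq Kd_0(y,\Lambda)^{-q}$ for all $y\in\mathbb{R}^n\setminus\Lambda$. Then for every $x\in\mathbb{R}^n\setminus\Lambda$, $$\big((-\Delta)^\alpha f^{\tau_1}\big)(x)\geq\frac{\tau_1}{\tau_2}f^{\tau_1-\tau_2}(x)\big((-\Delta)^\alpha f^{\tau_2}\big)(x).$$
   Context: $d_0$ is the Euclidean distance. $L_{2\alpha}(\mathbb{R}^n)=\{h:\int_{\mathbb{R}^n}\frac{|h(x)|}{1+|x|^{n+2\alpha}}dx<\infty\}$. The fractional Laplacian is $(-\Delta)^\alpha h(x)=-d_{n,\alpha}\int_{\mathbb{R}^n}\frac{h(x+y)+h(x-y)-2h(x)}{|y|^{n+2\alpha}}dy$ for $h\in L_{2\alpha}(\mathbb{R}^n)$, with $d_{n,\alpha}>0$ the normalizing constant making the Fourier symbol $|\xi|^{2\alpha}$. *)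

From HB Require Import structures.
From mathcomp Require Import all_boot all_order all_algebra.
From mathcomp Require Import all_classical all_reals all_analysis.
Set Implicit Arguments. Unset Strict Implicit. Unset Printing Implicit Defensive.
Import Order.TTheory GRing.Theory Num.Theory.
Import numFieldNormedType.Exports.
Local Open Scope classical_set_scope.
Local Open Scope ring_scope.

Section Rn.
Variable R : realType.

(** Lebesgue measure on R^n is
    built as the iterated product measure of the Lebesgue measure on R,
    living on the iterated product type [itR n] = R * (R * ( ... * unit)),
    transported to ['rV[R]_n] by the canonical bijection [itphi]. *)
Fixpoint itRM (n : nat) : {d : measure_display & measurableType d} :=
  match n with
  | 0 => existT _ _ (unit : measurableType _)
  | k.+1 => existT _ _ ((measurableTypeR R * projT2 (itRM k))%type : measurableType _)
  end.

Definition itR (n : nat) : measurableType (projT1 (itRM n)) := projT2 (itRM n).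

Fixpoint lebn (n : nat) : set (itR n) -> \bar R :=
  match n return set (itR n) -> \bar R with
  | 0 => @dirac _ unit tt R
  | k.+1 => ((@lebesgue_measure R) \x (@lebn k))%E
  end.
Arguments lebn : clear implicits.

(** canonical bijection R * (R * ... ) -> 'rV_n (first component = coordinate 0) *)
Fixpoint itphi (n : nat) : itR n -> 'rV[R]_n :=
  match n return itR n -> 'rV[R]_n with
  | 0 => fun _ => 0
  | k.+1 => fun p => \row_(i < k.+1)
       match unlift ord0 i with Some j => @itphi k p.2 0 j | None => p.1 end
  end.
Arguments itphi : clear implicits.

Definition eucl (n : nat) (x : 'rV[R]_n) : R := Num.sqrt (\sum_(i < n) x 0 i ^+ 2).
Definition d0 (n : nat) (x y : 'rV[R]_n) : R := eucl (x - y).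
Definition dist_set (n : nat) (y : 'rV[R]_n) (L : set 'rV[R]_n) : R :=
  inf [set d0 y z | z in L].

Definition Rn_integral (n : nat) (g : 'rV[R]_n -> R) : \bar R :=
  (\int[lebn n]_y (g (itphi n y))%:E)%E.

Definition Rn_null (n : nat) (L : set 'rV[R]_n) : Prop :=
  exists N : set (itR n), measurable N /\ lebn n N = 0%E /\ itphi n @^-1` L `<=` N.

(** almost-everywhere equality, and Lebesgue-class functions represented by a
    Borel (measurable) representative *)
Definition Rn_ae_eq (n : nat) (h g : 'rV[R]_n -> R) : Prop :=
  exists N : set (itR n), measurable N /\ lebn n N = 0%E /\
    forall y, ~ N y -> h (itphi n y) = g (itphi n y).

Definition Rn_measurable_fun (n : nat) (g : 'rV[R]_n -> R) : Prop :=
  measurable_fun setT (fun y => g (itphi n y)).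

Definition L2alpha (n : nat) (alpha : R) (h : 'rV[R]_n -> R) : Prop :=
  exists g, Rn_measurable_fun g /\ Rn_ae_eq h g /\
    (Rn_integral (fun x => (`|g x| / (1 + eucl x `^ (n%:R + 2 * alpha)))%R) < +oo)%E.

Definition Lloc (n : nat) (p : R) (h : 'rV[R]_n -> R) : Prop :=
  exists g, Rn_measurable_fun g /\ Rn_ae_eq h g /\
    forall Kc : set 'rV[R]_n, compact Kc ->
      (Rn_integral (fun x => ((\1_Kc x) * `|g x| `^ p)%R) < +oo)%E.

Fixpoint iderive (n : nat) (vs : seq 'rV[R]_n) (f : 'rV[R]_n -> R) : 'rV[R]_n -> R :=
  match vs with
  | [::] => f
  | v :: vs' => fun x => 'D_v (iderive vs' f) x
  end.

Definition smooth_on (n : nat) (U : set 'rV[R]_n) (f : 'rV[R]_n -> R) : Prop :=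
  forall vs : seq 'rV[R]_n, forall x, U x ->
    {for x, continuous (iderive vs f)} /\ forall v, derivable (iderive vs f) x v.

(** normalizing constant d_{n,alpha}: chosen so that the Fourier symbol is
    |xi|^{2 alpha}; evaluating the operator on x |-> exp(i xi.x) with xi = e_1
    gives d_{n,alpha} * 2 * \int (1 - cos y_1)/|y|^{n+2alpha} dy = 1. *)
Definition first_coord (n : nat) (y : 'rV[R]_n) : R :=
  \sum_(i < n) (if val i == 0%N then y 0 i else 0).

Definition dconst (n : nat) (alpha : R) : R :=
  (2 * fine (Rn_integral (fun y : 'rV[R]_n =>
       (1 - cos (first_coord y)) / eucl y `^ (n%:R + 2 * alpha))))^-1.

Definition fraclap (n : nat) (alpha : R) (h : 'rV[R]_n -> R) (x : 'rV[R]_n) : \bar R :=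
  (- (dconst n alpha)%:E *
     Rn_integral (fun y => ((h (x + y) + h (x - y) - 2 * h x) / eucl y `^ (n%:R + 2 * alpha))%R))%E.

End Rn.

(** The map [t |-> t ^ s] with [s = tau1 / tau2 < 1] is concave on [0, +oo), so it lies
    below its tangent at [a = f(x) ^ tau2].  Applied to [f(x +- y) ^ tau2] this bounds the
    second difference of [f ^ tau1] at [x] by [s * a ^ (s - 1)] times that of [f ^ tau2],
    pointwise in [y].  Integrating against the nonnegative kernel [|y| ^ (-n - 2 alpha)]
    and multiplying by [- d_{n,alpha} <= 0] reverses the inequality.  The Lebesgue integral,
    built from suprema over simple functions below the integrand, is monotone and positively
    homogeneous for arbitrary integrands, so no integrability of either side is needed. *)

From HB Require Import structures.
From mathcomp Require Import all_boot all_order all_algebra.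
From mathcomp Require Import all_classical all_reals all_analysis.
From mathcomp Require Import ring lra.
Set Implicit Arguments. Unset Strict Implicit. Unset Printing Implicit Defensive.
Import Order.TTheory GRing.Theory Num.Theory.
Import numFieldNormedType.Exports.
Local Open Scope classical_set_scope.
Local Open Scope ring_scope.

Lemma gt0_muleBr (R : realDomainType) (k : R) (a b : \bar R) :
  0 < k -> (0 <= a)%E -> (0 <= b)%E -> (k%:E * (a - b) = k%:E * a - k%:E * b)%E.
Proof.
move=> k0; have ky : (k%:E * +oo = +oo)%E by rewrite mulry gtr0_sg// mul1e.
have kNy : (k%:E * -oo = -oo)%E by rewrite mulrNy gtr0_sg// mul1e.
case: a => [a| |] //; case: b => [b| |] //= a0 b0.
- by rewrite -!EFinM mulrBr.
all: by rewrite ?addeNy ?addye ?ky ?kNy.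
Qed.

Section content_integral.
Local Open Scope ereal_scope.
Context d (T : measurableType d) (R : realType) (mu : set T -> \bar R).
Hypothesis mu0 : mu set0 = 0.
Hypothesis mu_ge0 : forall A, 0 <= mu A.
Import HBNNSimple.

(* [integral mu setT F] is [nnintegral F^\+ - nnintegral F^\-] for any set function [mu];
   the lemmas below only need [mu set0 = 0] and [mu >= 0], because [lebn n] is not
   packaged as a measure. *)
Definition nnintegral (g : T -> \bar R) := ereal_sup [set sintegral mu h |
  h in [set h : {nnsfun T >-> R} | forall x, (h x)%:E <= g x]].

Lemma integralTE (F : T -> \bar R) :
  integral mu setT F = nnintegral F^\+ - nnintegral F^\-.
Proof. by rewrite /integral patch_setT. Qed.

Lemma sintegral0_content : sintegral mu (cst 0%R) = 0.
Proof.
rewrite sintegralET fsbig1// => r _; rewrite preimage_cst.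
by case: ifPn => [/[!inE] <-|]; rewrite ?mul0e// mu0 mule0.
Qed.

Lemma gt0_sintegralrM (r : R) (h : {nnsfun T >-> R}) : (0 < r)%R ->
  sintegral mu (cst r \* h)%R = r%:E * sintegral mu h.
Proof.
move=> r0; have rN0 : r != 0%R by rewrite gt_eqF.
have mulemu_ge0 x : 0 <= x%:E * mu (h @^-1` [set x]).
  have [x0|x0] := leP 0%R x; first by rewrite mule_ge0.
  by rewrite preimage_nnfun0// mu0 mule0.
rewrite !sintegralET ge0_mule_fsumr//.
rewrite (reindex_fsbigT ( *%R r))/=; last first.
  by exists ( *%R r^-1); [exact: mulKf|exact: mulVKf].
by apply: eq_fsbigr => x; rewrite preimage_cstM// [(_ / r)%R]mulrC mulKf// muleA.
Qed.

Lemma nnintegral_ge0 (g : T -> \bar R) : (forall x, 0 <= g x) -> 0 <= nnintegral g.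
Proof.
by move=> g0; apply: ereal_sup_ubound; exists nnsfun0 => //; exact: sintegral0_content.
Qed.

Lemma nnintegral0 : nnintegral (cst 0) = 0.
Proof.
apply/eqP; rewrite eq_le nnintegral_ge0// andbT.
apply: ge_ereal_sup => _ [h /= h0 <-].
rewrite (eq_sintegral (cst 0%R)) ?sintegral0_content// => x /=.
by apply/eqP; rewrite eq_le fun_ge0 andbT -lee_fin h0.
Qed.

Lemma le_nnintegral (g1 g2 : T -> \bar R) :
  (forall x, g1 x <= g2 x) -> nnintegral g1 <= nnintegral g2.
Proof.
move=> g12; apply: ereal_sup_le => _ [h hg <-]; exists h => // x.
exact: le_trans (hg x) (g12 x).
Qed.

Lemma gt0_nnintegralZl (k : R) (g : T -> \bar R) : (0 < k)%R ->
  nnintegral (fun x => k%:E * g x) = k%:E * nnintegral g.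
Proof.
move=> k0; rewrite /nnintegral -ereal_sup_pZl//; congr ereal_sup.
have kN0 : k != 0%R by rewrite gt_eqF.
apply/seteqP; split => e /=.
- move=> [h hk <-].
  have kV0 : (0 <= k^-1)%R by rewrite invr_ge0 ltW.
  exists (sintegral mu (scale_nnsfun h kV0)).
    exists (scale_nnsfun h kV0) => // x /=.
    by rewrite EFinM -(@lee_pmul2l _ k%:E) ?lte_fin// muleA -EFinM mulfV// mul1r.
  rewrite -gt0_sintegralrM//; apply: eq_sintegral => x /=.
  by rewrite mulrA mulfV// mul1r.
- move=> [e0 [h hg <-] <-].
  exists (scale_nnsfun h (ltW k0)); last by rewrite -gt0_sintegralrM.
  by move=> x /=; rewrite EFinM lee_pmul2l ?lte_fin.
Qed.

Lemma content_integral_ge0 (F : T -> \bar R) :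
  (forall x, 0 <= F x) -> 0 <= integral mu setT F.
Proof.
move=> F0; rewrite integralTE.
have -> : F^\- = cst 0.
  by apply/funext => x; apply: (ge0_funenegE (D := setT)); rewrite ?inE.
by rewrite nnintegral0 sube0 nnintegral_ge0// => x; exact: funepos_ge0.
Qed.

Lemma le_content_integral (F G : T -> \bar R) :
  (forall x, F x <= G x) -> integral mu setT F <= integral mu setT G.
Proof.
move=> FG; rewrite !integralTE; apply: leeB; apply: le_nnintegral => x.
- by apply: (funepos_le (D := setT)); rewrite ?inE.
- by apply: (funeneg_le (D := setT)); rewrite ?inE.
Qed.

Lemma gt0_content_integralZl (k : R) (F : T -> \bar R) : (0 < k)%R ->
  integral mu setT (fun x => k%:E * F x) = k%:E * integral mu setT F.
Proof.
move=> k0; rewrite !integralTE ge0_funeposM ?ge0_funenegM ?ltW//.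
by rewrite !gt0_nnintegralZl// gt0_muleBr// nnintegral_ge0// => x;
  exact: funeneg_ge0.
Qed.

End content_integral.

Lemma powR_tangent_le (R : realType) (s a b : R) : 0 < s -> s < 1 -> 0 < a -> 0 <= b ->
  b `^ s - a `^ s <= s * a `^ (s - 1) * (b - a).
Proof.
move=> s0 s1 a0 b0; have s1' : 0 < 1 - s by rewrite subr_gt0.
have amgm : b `^ s * a `^ (1 - s) <= b * s + a * (1 - s).
  have := @conjugate_powR R (b `^ s) (a `^ (1 - s)) s^-1 (1 - s)^-1.
  rewrite -!powRrM !mulfV ?gt_eqF// (powRr1 b0) (powRr1 (ltW a0)) !invrK.
  by apply; rewrite ?powR_ge0 ?invr_gt0// addrC subrK.
have aP1 : a `^ (1 - s) * a `^ (s - 1) = 1.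
  by rewrite -powRD ?(gt_eqF a0) ?implybT// addrA subrK subrr powRr0.
have aPs : a * a `^ (s - 1) = a `^ s.
  by rewrite -{1}(powRr1 (ltW a0)) -powRD ?(gt_eqF a0) ?implybT// addrC subrK.
have := ler_wpM2r (powR_ge0 a (s - 1)) amgm.
rewrite -(mulrA (b `^ s)) aP1 mulr1 mulrDl -(mulrA a) (mulrC (1 - s)) mulrA aPs.
have -> : s * a `^ (s - 1) * (b - a) = b * s * a `^ (s - 1) - s * (a * a `^ (s - 1)).
  by ring.
rewrite aPs; lra.
Qed.

Lemma powR_second_difference_le (R : realType) (s a b1 b2 : R) :
  0 < s -> s < 1 -> 0 < a -> 0 <= b1 -> 0 <= b2 ->
  b1 `^ s + b2 `^ s - 2 * a `^ s <= s * a `^ (s - 1) * (b1 + b2 - 2 * a).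
Proof.
move=> s0 s1 a0 b10 b20.
have := powR_tangent_le s0 s1 a0 b10; have := powR_tangent_le s0 s1 a0 b20.
lra.
Qed.

Lemma normr_le_eucl (R : realType) n (v : 'rV[R]_n) : `|v| <= eucl v.
Proof.
rewrite /Num.norm /= mx_normrE.
apply/bigmax_leP; split; first exact: sqrtr_ge0.
move=> ij _; have -> : ij.1 = 0 by apply: ord1.
rewrite -sqrtr_sqr /eucl ler_sqrt; last by apply: sumr_ge0 => i _; exact: sqr_ge0.
rewrite (bigD1 ij.2) //= lerDl; apply: sumr_ge0 => i _; exact: sqr_ge0.
Qed.

Lemma dist_set_gt0 (R : realType) n (L : set 'rV[R]_n) x :
  closed L -> L !=set0 -> ~ L x -> 0 < dist_set x L.
Proof.
move=> cL [z0 Lz0] nLx.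
have : nbhs x (~` L) by have := closed_openC cL; rewrite openE => /(_ x nLx).
move/nbhs_ballP => [e /= e0 He].
apply: (lt_le_trans e0); apply: lb_le_inf; first by exists (d0 x z0), z0.
move=> _ [z Lz <-]; apply: le_trans (normr_le_eucl (x - z)).
rewrite leNgt; apply/negP => hz; apply: (He z) => //.
by rewrite -ball_normE /ball_ /=.
Qed.

Lemma lebn_ge0 {R : realType} {n : nat} (A : set (itR R n)) : (0 <= @lebn R n A)%E.
Proof.
elim: n A => [|k IH] A /=; first exact: measure_ge0.
by apply: integral_ge0 => y _; exact: IH.
Qed.

Lemma lebn0 {R : realType} {n : nat} : @lebn R n set0 = 0%E.
Proof.
elim: n => [|k IH] /=; first exact: measure0.
by apply: integral0_eq => y _ /=; rewrite xsection0.
Qed.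

Lemma dconst_ge0 (R : realType) n (alpha : R) : 0 <= dconst n alpha.
Proof.
rewrite /dconst invr_ge0 mulr_ge0// fine_ge0// /Rn_integral.
apply: (content_integral_ge0 lebn0) => y.
by rewrite lee_fin divr_ge0 ?powR_ge0// subr_ge0 cos_le1.
Qed.

Lemma fraclap_ge_scale (R : realType) n (alpha c : R) (h1 h2 : 'rV[R]_n -> R) x :
  0 < c ->
  (forall y, h1 (x + y) + h1 (x - y) - 2 * h1 x <=
             c * (h2 (x + y) + h2 (x - y) - 2 * h2 x)) ->
  (c%:E * fraclap alpha h2 x <= fraclap alpha h1 x)%E.
Proof.
move=> c0 h12; rewrite /fraclap /Rn_integral muleCA !mulNe leeN2.
apply: lee_wpmul2l; first by rewrite lee_fin dconst_ge0.
rewrite -(gt0_content_integralZl lebn0 (@lebn_ge0 _ _))//.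
apply: le_content_integral => y.
by rewrite -EFinM lee_fin mulrA ler_wpM2r ?invr_ge0 ?powR_ge0.
Qed.

Theorem proposition3p15 (R : realType) (n : nat) (alpha tau1 tau2 : R)
    (Lambda : set 'rV[R]_n) (f : 'rV[R]_n -> R) :
  (0 < n)%N ->
  0 < alpha -> alpha < 1 ->
  0 < tau1 -> tau1 < tau2 ->
  closed Lambda -> Lambda !=set0 -> Rn_null Lambda ->
  L2alpha alpha f ->
  smooth_on (~` Lambda) f ->
  Lloc tau2 f ->
  (exists K q : R, 0 < K /\ 0 < q /\
     forall y, ~ Lambda y ->
       K^-1 * dist_set y Lambda `^ (- q) <= f y /\
       f y <= K * dist_set y Lambda `^ (- q)) ->
  forall x, ~ Lambda x ->
    (fraclap alpha (fun y => (f y `^ tau1)%R) x >=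
     ((tau1 / tau2) * f x `^ (tau1 - tau2))%:E *
       fraclap alpha (fun y => (f y `^ tau2)%R) x)%E.
Proof.
move=> _ _ _ tau1_gt0 tau12 clL neL _ _ _ _ [K [q [K0 [_ f_bound]]]] x Lx.
have tau2_gt0 : 0 < tau2 by apply: lt_trans tau12.
set s := tau1 / tau2.
have s_gt0 : 0 < s by rewrite divr_gt0.
have s_lt1 : s < 1 by rewrite ltr_pdivrMr// mul1r.
have fx_gt0 : 0 < f x.
  apply: lt_le_trans (f_bound x Lx).1.
  by rewrite mulr_gt0 ?invr_gt0// powR_gt0// dist_set_gt0.
have powR_tau1 w : f w `^ tau1 = (f w `^ tau2) `^ s.
  by rewrite -powRrM /s mulrCA mulfV ?gt_eqF// mulr1.
have -> : s * f x `^ (tau1 - tau2) = s * (f x `^ tau2) `^ (s - 1).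
  by congr (_ * _); rewrite -powRrM mulrBr mulr1 /s mulrCA mulfV ?gt_eqF// mulr1.
apply: fraclap_ge_scale => [|y]; first by rewrite mulr_gt0// !powR_gt0.
by rewrite !powR_tau1 powR_second_difference_le ?powR_gt0 ?powR_ge0.
Qed.
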